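(* The collection $\mathbf{FinCorel}^\circ$ of corelations is closed under composition and tensor in $\mathbf{FinCorel}$ and contains all identities and symmetries; hence $\mathbf{FinCorel}^\circ$ is a sub-PROP of $\mathbf{FinCorel}$.
   Context: A PROP is a strict symmetric monoidal category whose monoid of objects is $(\mathbb{N},+,0)$. Write $\underline{m}=\{1,\dots,m\}$. $\mathbf{FinCorel}$ is the PROP whose morphisms $m\to n$ are equivalence relations on $\underline{m}\sqcup\underline{n}$; the composite of $R:m\to n$ and $S:n\to p$ is the restriction to $\underline{m}\sqcup\underline{p}$ of the equivalence relation generated by $R\cup S$ on $\underline{m}\sqcup\underline{n}\sqcup\underline{p}$; tensor is disjoint union with reindexing by addition; the identity at $n$ identifies each input $i$ with output $i$; symmetries are transposition corelations. $\mathbf{FinCorel}^\circ$ consists of those corelations $R:m\to n$ such that (a) every equivalence class of $R$ contains exactly one element of $\underline{m}$ and (b) every equivalence class contains at least one element of $\underline{n}$. *)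

From mathcomp Require Import all_boot.
Set Implicit Arguments. Unset Strict Implicit. Unset Printing Implicit Defensive.

(* The set  m ⊔ n  of a corelation m -> n is the finite type 'I_m + 'I_n:
   inputs are inl i, outputs are inr j (0-based indexing of {1..m}). *)
Definition corel_carrier (m n : nat) : finType := ('I_m + 'I_n)%type.

Definition is_corel (m n : nat) (R : rel (corel_carrier m n)) : Prop :=
  reflexive R /\ symmetric R /\ transitive R.

Definition cmp_toR (m n p : nat) (x : ('I_m + 'I_n + 'I_p)%type)
  : option ('I_m + 'I_n) :=
  match x with
  | inl (inl i) => Some (inl i)
  | inl (inr j) => Some (inr j)
  | inr _ => None
  end.

Definition cmp_toS (m n p : nat) (x : ('I_m + 'I_n + 'I_p)%type)
  : option ('I_n + 'I_p) :=
  match x with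
  | inl (inl _) => None
  | inl (inr j) => Some (inl j)
  | inr k => Some (inr k)
  end.

Definition opt_rel (T : Type) (R : rel T) (a b : option T) : bool :=
  match a, b with Some a', Some b' => R a' b' | _, _ => false end.

(* R ∪ S viewed as a relation on m ⊔ n ⊔ p *)
Definition cmp_edge (m n p : nat) (R : rel (corel_carrier m n))
  (S : rel (corel_carrier n p)) : rel ('I_m + 'I_n + 'I_p)%type :=
  fun x y => opt_rel R (cmp_toR x) (cmp_toR y) || opt_rel S (cmp_toS x) (cmp_toS y).

Definition cmp_gen (m n p : nat) (R : rel (corel_carrier m n))
  (S : rel (corel_carrier n p)) : rel ('I_m + 'I_n + 'I_p)%type :=
  connect (fun x y => cmp_edge R S x y || cmp_edge R S y x).

Definition cmp_embed (m n p : nat) (x : corel_carrier m p) : ('I_m + 'I_n + 'I_p)%type :=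
  match x with inl i => inl (inl i) | inr k => inr k end.

Definition corel_comp (m n p : nat) (R : rel (corel_carrier m n))
  (S : rel (corel_carrier n p)) : rel (corel_carrier m p) :=
  fun x y => cmp_gen R S (cmp_embed n x) (cmp_embed n y).

Definition tns_part (m n m' n' : nat) (x : corel_carrier (m + m') (n + n'))
  : (corel_carrier m n + corel_carrier m' n')%type :=
  match x with
  | inl i => match split i with inl a => inl (inl a) | inr b => inr (inl b) end
  | inr j => match split j with inl a => inl (inr a) | inr b => inr (inr b) end
  end.

Definition corel_tensor (m n m' n' : nat) (R : rel (corel_carrier m n))
  (R' : rel (corel_carrier m' n')) : rel (corel_carrier (m + m') (n + n')) :=
  fun x y =>
    match tns_part x, tns_part y with
    | inl a, inl b => R a b
    | inr a, inr b => R' a b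
    | _, _ => false
    end.

Definition id_label (n : nat) (x : corel_carrier n n) : 'I_n :=
  match x with inl i => i | inr j => j end.

Definition corel_id (n : nat) : rel (corel_carrier n n) :=
  fun x y => id_label x == id_label y.

(* ---- symmetry sigma_{m,n} : m + n -> n + m ----
   each element is labelled by its wire in 'I_m + 'I_n:
   input k of m+n is wire split k; output l of n+m is wire
   inr b if l = b < n, and inl a if l = n + a. *)
Definition sym_label (m n : nat) (x : corel_carrier (m + n) (n + m)) : ('I_m + 'I_n)%type :=
  match x with
  | inl k => split k
  | inr l => match split l with inl b => inr b | inr a => inl a end
  end.

Definition corel_sym (m n : nat) : rel (corel_carrier (m + n) (n + m)) :=
  fun x y => sym_label x == sym_label y.

Definition in_FinCorel_circ (m n : nat) (R : rel (corel_carrier m n)) : Prop :=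
  is_corel R /\
  forall x : corel_carrier m n,
    #|[set i : 'I_m | R x (inl i)]| = 1 /\ exists j : 'I_n, R x (inr j).

Arguments corel_id n : clear implicits.
Arguments corel_sym m n : clear implicits.

(* A corelation R : m -> n lies in FinCorel° exactly when it is the kernel of
   a labelling f : m ⊔ n -> m that fixes every input and is hit by some
   output on every input.  Identities and symmetries are such kernels
   directly, and a tensor is labelled summand by summand.  For a composite
   R ; S, label an output k of S by f (g k), where f and g label R and S: every
   edge of R ∪ S preserves this glued label, and every element of m ⊔ n ⊔ p is
   joined to the input carrying its label, so the generated equivalence is
   exactly the kernel of the glued labelling. *)

From mathcomp Require Import all_boot.
Set Implicit Arguments. Unset Strict Implicit. Unset Printing Implicit Defensive.

Lemma card_set_eq1P (T : finType) (P : pred T) :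
  reflect (exists i, forall k, P k = (k == i)) (#|[set k | P k]| == 1).
Proof.
apply: (iffP cards1P) => [[i /setP Pi] | [i Pi]]; exists i.
  by move=> k; have := Pi k; rewrite !inE.
by apply/setP => k; rewrite !inE.
Qed.

Lemma connect_invariant (T : finType) (U : eqType) (e : rel T) (h : T -> U) :
  (forall x y, e x y -> h x = h y) -> forall x y, connect e x y -> h x = h y.
Proof.
move=> eh x y /connectP[q e_q ->]; elim: q x e_q => //= z q IHq x /andP[/eh-> ].
exact: IHq.
Qed.

Definition input_labelling (m n : nat) (f : corel_carrier m n -> 'I_m) : Prop :=
  (forall i, f (inl i) = i) /\ (forall i, exists j, f (inr j) = i).

Lemma in_FinCorel_circP (m n : nat) (R : rel (corel_carrier m n)) :
  in_FinCorel_circ R <->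
  exists2 f, input_labelling f & R =2 [rel x y | f x == f y].
Proof.
split=> [[[Rrefl [Rsym Rtrans]] Rclass] | [f [f_in f_out] Rf]].
  have uniq_in x i i' : R x (inl i) -> R x (inl i') -> i = i'.
    have /eqP/card_set_eq1P[i0 Ri0] := (Rclass x).1.
    by rewrite !Ri0 => /eqP-> /eqP->.
  have /fin_all_exists[f Rf] x : exists i, R x (inl i).
    by have /eqP/card_set_eq1P[i0 Ri0] := (Rclass x).1; exists i0; rewrite Ri0.
  have Rf_eq x y : R x y = (f x == f y).
    apply/idP/eqP => [Rxy | fxy].
      by apply: (uniq_in y); [apply: Rtrans (Rf x); rewrite Rsym | apply: Rf].
    by apply: Rtrans (Rf x) _; rewrite Rsym fxy.
  have f_in i : f (inl i) = i by apply/esym/(uniq_in (inl i)); [apply: Rrefl | apply: Rf].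
  exists f => //; split=> // i; have [j Rij] := (Rclass (inl i)).2.
  by exists j; apply/eqP; rewrite -[X in _ == X]f_in -Rf_eq Rsym.
split=> [|x].
  split=> [x | ]; first by rewrite Rf /=.
  split=> [x y | y x z]; rewrite !Rf /=; first by rewrite eq_sym.
  by move=> /eqP->.
split; last by have [j fj] := f_out (f x); exists j; rewrite Rf /= fj.
by apply/eqP/card_set_eq1P; exists (f x) => i; rewrite Rf /= f_in eq_sym.
Qed.

Lemma corel_id_circ (n : nat) : in_FinCorel_circ (corel_id n).
Proof.
apply/in_FinCorel_circP; exists (@id_label n) => //.
by split=> i; last exists i.
Qed.

Lemma corel_sym_circ (m n : nat) : in_FinCorel_circ (corel_sym m n).
Proof.
apply/in_FinCorel_circP; exists (unsplit \o @sym_label m n).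
  split=> [k | i]; first exact: splitK.
  case Ei: (split i) (splitK i) => [a | b] <-.
    by exists (rshift n a); rewrite /= (unsplitK (inr a)).
  by exists (lshift m b); rewrite /= (unsplitK (inl b)).
by move=> x y; rewrite /= /corel_sym (can_eq unsplitK).
Qed.

Lemma corel_tensor_circ (m n m' n' : nat) (R : rel (corel_carrier m n))
    (R' : rel (corel_carrier m' n')) :
  in_FinCorel_circ R -> in_FinCorel_circ R' -> in_FinCorel_circ (corel_tensor R R').
Proof.
move=> /in_FinCorel_circP[f [f_in f_out] Rf] /in_FinCorel_circP[f' [f'_in f'_out] R'f'].
apply/in_FinCorel_circP.
pose g x := unsplit (match tns_part x with inl a => inl (f a) | inr a' => inr (f' a') end).
exists g.
  split=> [k | i].
    by rewrite /g /=; case: (split k) (splitK k) => [a | b] <-; rewrite ?f_in ?f'_in.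
  case Ei: (split i) (splitK i) => [a | b] <-.
    have [j fj] := f_out a; exists (lshift n' j).
    by rewrite /g /= (unsplitK (inl j)) fj.
  have [j fj] := f'_out b; exists (rshift n j).
  by rewrite /g /= (unsplitK (inr j)) fj.
move=> x y; rewrite /= /g /corel_tensor (can_eq unsplitK).
by case: (tns_part x) => a; case: (tns_part y) => b; rewrite ?Rf ?R'f'.
Qed.

Section Composition.

Variables (m n p : nat) (R : rel (corel_carrier m n)) (S : rel (corel_carrier n p)).
Variables (f : corel_carrier m n -> 'I_m) (g : corel_carrier n p -> 'I_n).
Hypotheses (Rf : R =2 [rel x y | f x == f y]) (Sg : S =2 [rel x y | g x == g y]).
Hypotheses (f_in : forall i, f (inl i) = i) (g_in : forall j, g (inl j) = j).

Definition cmp_embS (w : corel_carrier n p) : ('I_m + 'I_n + 'I_p)%type :=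
  match w with inl j => inl (inr j) | inr k => inr k end.

Definition glued_label (z : 'I_m + 'I_n + 'I_p) : 'I_m :=
  match z with inl w => f w | inr k => f (inr (g (inr k))) end.

Lemma cmp_gen_R w w' : R w w' -> cmp_gen R S (inl w) (inl w').
Proof.
by move=> Rw; apply: connect1; rewrite /cmp_edge; case: w w' Rw => [?|?] [?|?] /= ->.
Qed.

Lemma cmp_gen_S w w' : S w w' -> cmp_gen R S (cmp_embS w) (cmp_embS w').
Proof.
move=> Sw; apply: connect1; rewrite /cmp_edge.
by case: w w' Sw => [?|?] [?|?] /= ->; rewrite ?orbT.
Qed.

Lemma glued_label_edge x y : cmp_edge R S x y -> glued_label x = glued_label y.
Proof.
case: x y => [[?|?]|?] [[?|?]|?]; rewrite /cmp_edge /= ?Rf ?Sg /= ?g_in ?orbF //.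
all: by [move=> /eqP-> | case/orP=> /eqP->].
Qed.

Lemma cmp_gen_glued_label z z' : cmp_gen R S z z' = (glued_label z == glued_label z').
Proof.
apply/idP/eqP; first by apply: connect_invariant => x y /orP[] /glued_label_edge.
move=> glued_eq.
have to_root x : cmp_gen R S x (inl (inl (glued_label x))).
  case: x => [[i | j] | k] /=; first by rewrite f_in; apply: connect0.
    by apply: (cmp_gen_R (w := inr j)); rewrite Rf /= f_in.
  apply: connect_trans (cmp_gen_S (w := inr k) (w' := inl (g (inr k))) _) _.
    by rewrite Sg /= g_in.
  by apply: (cmp_gen_R (w := inr _)); rewrite Rf /= f_in.
have cmp_gen_sym : symmetric (cmp_gen R S).
  by apply: sym_connect_sym => x y; rewrite orbC.
have root_z' := to_root z'; rewrite cmp_gen_sym -glued_eq in root_z'.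
exact: connect_trans (to_root z) root_z'.
Qed.

End Composition.

Lemma corel_comp_circ (m n p : nat) (R : rel (corel_carrier m n))
    (S : rel (corel_carrier n p)) :
  in_FinCorel_circ R -> in_FinCorel_circ S -> in_FinCorel_circ (corel_comp R S).
Proof.
move=> /in_FinCorel_circP[f [f_in f_out] Rf] /in_FinCorel_circP[g [g_in g_out] Sg].
apply/in_FinCorel_circP; exists (glued_label f g \o @cmp_embed m n p).
  split=> [i | i]; first exact: f_in.
  have [j fj] := f_out i; have [k gk] := g_out j.
  by exists k; rewrite /= gk fj.
by move=> x y; apply: cmp_gen_glued_label.
Qed.

Theorem proposition2p12 :
  (forall (m n p : nat) (R : rel (corel_carrier m n)) (S : rel (corel_carrier n p)),
      in_FinCorel_circ R -> in_FinCorel_circ S -> in_FinCorel_circ (corel_comp R S)) /\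
  (forall (m n m' n' : nat) (R : rel (corel_carrier m n)) (R' : rel (corel_carrier m' n')),
      in_FinCorel_circ R -> in_FinCorel_circ R' -> in_FinCorel_circ (corel_tensor R R')) /\
  (forall n : nat, in_FinCorel_circ (corel_id n)) /\
  (forall m n : nat, in_FinCorel_circ (corel_sym m n)).
Proof.
split; first exact: corel_comp_circ.
split; first exact: corel_tensor_circ.
split; first exact: corel_id_circ.
exact: corel_sym_circ.
Qed.
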